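(* Let $G$ be a finite graph with a fixed orientation of each edge, and let $p\colon \widehat G\to G$ be its oriented edge double with involution $\sigma\colon\widehat G\to\widehat G$. Let $E_1,E_{-1}\subseteq H_1(\widehat G;\mathbb{R})$ be the eigenspaces of $\sigma_*$ for the eigenvalues $1$ and $-1$. Then $H_1(\widehat G;\mathbb{R})=E_1\oplus E_{-1}$, the map $p_*\colon H_1(\widehat G;\mathbb{R})\to H_1(G;\mathbb{R})$ restricts to an isomorphism $E_1\to H_1(G;\mathbb{R})$, and $\ker(p_* )=E_{-1}$, which is isomorphic to the space $C_1(G;\mathbb{R})$ of simplicial $1$-chains of $G$.
   Context: The oriented edge double of $G$ is the graph $\widehat G$ together with a map $p\colon\widehat G\to G$ that is a bijection on vertices and such that for each oriented edge $e$ of $G$ there are exactly two oriented edges $e_+,e_-$ of $\widehat G$ over it, with $p(e_+)=e$ and $p(e_-)=\overline e$ (here $\overline e$ denotes $e$ with reversed orientation). The involution $\sigma\colon\widehat G\to\widehat G$ is defined by $e_+\mapsto \overline{e_-}$ and $e_-\mapsto\overline{e_+}$; it satisfies $p\circ\sigma=p$. *)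

From HB Require Import structures.
From mathcomp Require Import all_boot all_order all_algebra.
Set Implicit Arguments. Unset Strict Implicit. Unset Printing Implicit Defensive.
Import GRing.Theory Num.Theory.
Local Open Scope ring_scope.

Record graph := Graph {
  gV : finType;
  gE : finType;
  src : gE -> gV;
  tgt : gE -> gV }.

Definition C1 (R : fieldType) (G : graph) := {ffun gE G -> R^o}.
Definition C0 (R : fieldType) (G : graph) := {ffun gV G -> R^o}.

Definition boundary (R : fieldType) (G : graph) : 'Hom(C1 R G, C0 R G) :=
  linfun (fun c : C1 R G =>
    [ffun v => \sum_(e | tgt e == v) c e - \sum_(e | src e == v) c e] : C0 R G).

(* H_1(G;R) = ker of the boundary (a graph has no 2-cells). *)
Definition H1 (R : fieldType) (G : graph) : {vspace C1 R G} :=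
  lker (boundary R G).

(* A graph morphism sending vertices to vertices and edges to edges:
   [mor_s x = true] means the fixed orientation of x is sent to the fixed
   orientation of [mor_e x], [false] means to its reverse. *)
Record gmorph (G H : graph) := GMorph {
  mor_v : gV G -> gV H;
  mor_e : gE G -> gE H;
  mor_s : gE G -> bool;
  mor_compat : forall x,
    if mor_s x then mor_v (src x) = src (mor_e x) /\ mor_v (tgt x) = tgt (mor_e x)
    else mor_v (src x) = tgt (mor_e x) /\ mor_v (tgt x) = src (mor_e x) }.

Definition chain_map (R : fieldType) (G H : graph) (f : gmorph G H)
  : 'Hom(C1 R G, C1 R H) :=
  linfun (fun c : C1 R G =>
    [ffun y => \sum_(x | mor_e f x == y)
                 (if mor_s f x then c x else - c x)] : C1 R H).

(* The oriented edge double: same vertices; over each edge e of G two edges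
   (e,true) = e_+ oriented src e -> tgt e, and (e,false) = e_- oriented
   tgt e -> src e (so p(e_+) = e and p(e_-) = reverse of e). *)
Definition edge_double (G : graph) : graph :=
  @Graph (gV G) (gE G * bool)%type
    (fun x => if x.2 then src x.1 else tgt x.1)
    (fun x => if x.2 then tgt x.1 else src x.1).

Lemma edge_double_p_compat (G : graph) (x : gE (edge_double G)) :
  if x.2 then (src x : gV (edge_double G)) = src x.1 /\
               (tgt x : gV (edge_double G)) = tgt x.1
  else (src x : gV (edge_double G)) = tgt x.1 /\
       (tgt x : gV (edge_double G)) = src x.1.
Proof. by case: x => e []. Qed.

Definition edge_double_p (G : graph) : gmorph (edge_double G) G :=
  @GMorph (edge_double G) G id (fun x => x.1) (fun x => x.2)
    (@edge_double_p_compat G).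

Lemma edge_double_sigma_compat (G : graph) (x : gE (edge_double G)) :
  (src x : gV (edge_double G)) = tgt ((x.1, ~~ x.2) : gE (edge_double G)) /\
  (tgt x : gV (edge_double G)) = src ((x.1, ~~ x.2) : gE (edge_double G)).
Proof. by case: x => e []. Qed.

Definition edge_double_sigma (G : graph) : gmorph (edge_double G) (edge_double G) :=
  @GMorph (edge_double G) (edge_double G) id (fun x => (x.1, ~~ x.2))
    (fun _ => false) (@edge_double_sigma_compat G).

(* A 1-chain c on the edge double is a pair of coefficients c(e,+), c(e,-)
   per edge e of G; p_* sends it to e |-> c(e,+) - c(e,-) and sigma_* to
   (e,b) |-> -c(e,~b).  The boundary of the double factors through p_*, so
   H_1 of the double is the preimage of H_1(G): it is sigma_*-stable and, 2
   being invertible, splits into the eigenspaces of the involution sigma_*.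
   The kernel of p_* is exactly the (-1)-eigenspace (c(e,+) = c(e,-)), the
   image of the diagonal embedding of C_1(G), and lies inside H_1; a cycle z
   of G lifts to the sigma_*-invariant cycle (z/2, -z/2). *)

From HB Require Import structures.
From mathcomp Require Import all_boot all_order all_algebra.
Set Implicit Arguments. Unset Strict Implicit. Unset Printing Implicit Defensive.
Import GRing.Theory Num.Theory.
Local Open Scope ring_scope.

Section LinearInvolution.

Variables (K : fieldType) (V : vectType K) (s : 'End(V)).
Implicit Types (f : 'End(V)) (U : {vspace V}).

Lemma memv_leigenspace f a v : (v \in passmx.leigenspace f a) = (f v == a *: v).
Proof.
by rewrite memv_ker add_lfunE opp_lfunE scale_lfunE id_lfunE subr_eq0.
Qed.

Hypothesis two_neq0 : (2%:R : K) != 0.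

Lemma capv_leigenspace1N1 :
  (passmx.leigenspace s 1 :&: passmx.leigenspace s (-1))%VS = 0%VS.
Proof.
apply/vspaceP => v; rewrite memv_cap !memv_leigenspace scale1r scaleN1r memv0.
apply/idP/eqP => [/andP[/eqP-> /eqP/eqP] | ->]; last by rewrite linear0 oppr0 eqxx.
by rewrite -addr_eq0 -mulr2n -scaler_nat scaler_eq0 (negbTE two_neq0) => /eqP.
Qed.

Lemma directv_leigenspace1N1 U :
  directv (U :&: passmx.leigenspace s 1 + U :&: passmx.leigenspace s (-1)).
Proof.
apply/directv_addP/eqP; rewrite -subv0 -capv_leigenspace1N1.
by apply: capvS; apply: capvSr.
Qed.

Hypothesis sK : involutive s.

Lemma addv_leigenspace1N1 U : (s @: U <= U)%VS ->
  (U :&: passmx.leigenspace s 1 + U :&: passmx.leigenspace s (-1))%VS = U.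
Proof.
move=> sU; apply/eqP; rewrite eqEsubv subv_add !capvSl /=.
apply/subvP => u Uu; have sUu : s u \in U by rewrite (subvP sU) ?memv_img.
have -> : u = 2%:R^-1 *: (u + s u) + 2%:R^-1 *: (u - s u).
  by rewrite -scalerDr addrACA subrr addr0 -mulr2n -scaler_nat scalerA mulVf ?scale1r.
(* Restated so that the images are syntactically [s _], which [sK] can rewrite. *)
have sZ a v : s (a *: v) = a *: s v by exact: linearZ.
have sD v w : s (v + w) = s v + s w by exact: linearD.
have sB v w : s (v - w) = s v - s w by exact: linearB.
apply: memv_add; rewrite memv_cap memv_leigenspace memvZ ?memvD ?memvN //=.
  by rewrite sZ sD sK addrC scale1r.
by rewrite sZ sB sK -opprB scalerN scaleN1r.
Qed.

End LinearInvolution.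

Section Chains.

Variable R : fieldType.

Definition boundary_fun (G : graph) (c : C1 R G) : C0 R G :=
  [ffun v => \sum_(e | tgt e == v) c e - \sum_(e | src e == v) c e].

Fact boundary_fun_is_linear G : linear (@boundary_fun G).
Proof.
move=> a u v; apply/ffunP => x.
have auvE e : (a *: u + v) e = a *: u e + v e by rewrite !ffunE.
rewrite !ffunE !(eq_bigr _ (fun e _ => auvE e)) !big_split /=.
by rewrite -!scaler_sumr scalerBr addrACA opprD.
Qed.

HB.instance Definition _ G :=
  GRing.isLinear.Build R (C1 R G) (C0 R G) _ (@boundary_fun G)
    (@boundary_fun_is_linear G).

Lemma boundaryE G c v :
  boundary R G c v = \sum_(e | tgt e == v) c e - \sum_(e | src e == v) c e.
Proof. by rewrite /boundary (lfunE (@boundary_fun G)) ffunE. Qed.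

Definition chain_map_fun G H (f : gmorph G H) (c : C1 R G) : C1 R H :=
  [ffun y => \sum_(x | mor_e f x == y) (if mor_s f x then c x else - c x)].

Fact chain_map_fun_is_linear G H f : linear (@chain_map_fun G H f).
Proof.
move=> a u v; apply/ffunP => y; rewrite !ffunE scaler_sumr -big_split /=.
by apply: eq_bigr => x _; case: (mor_s f x); rewrite !ffunE // scalerN opprD.
Qed.

HB.instance Definition _ G H f :=
  GRing.isLinear.Build R (C1 R G) (C1 R H) _ (@chain_map_fun G H f)
    (@chain_map_fun_is_linear G H f).

Lemma chain_mapE G H (f : gmorph G H) c y :
  chain_map R f c y =
  \sum_(x | mor_e f x == y) (if mor_s f x then c x else - c x).
Proof. by rewrite /chain_map (lfunE (@chain_map_fun G H f)) ffunE. Qed.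

End Chains.

Section EdgeDouble.

Variables (R : fieldType) (G : graph).
Implicit Types (a : C1 R G) (c : C1 R (edge_double G)).

Local Notation Gh := (edge_double G).
Local Notation p_ := (chain_map R (edge_double_p G)).
Local Notation s_ := (chain_map R (edge_double_sigma G)).

Lemma sum_edge_double (M : zmodType) (F : gE Gh -> M) :
  \sum_x F x = \sum_e (F (e, true) + F (e, false)).
Proof.
rewrite (eq_bigr (fun x => F (x.1, x.2))) => [|[]//].
by rewrite -(pair_bigA _ (fun e b => F (e, b))); apply: eq_bigr => e _; rewrite big_bool.
Qed.

Lemma edge_double_pE c e : p_ c e = c (e, true) - c (e, false).
Proof.
rewrite chain_mapE big_mkcond sum_edge_double /= (bigD1 e) //= eqxx.
by rewrite big1 ?addr0 // => e' /negbTE->; rewrite addr0.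
Qed.

Lemma edge_double_sigmaE c e b : s_ c (e, b) = - c (e, ~~ b).
Proof.
rewrite chain_mapE (big_pred1 (e, ~~ b)) // => -[e' b'] /=.
by rewrite !xpair_eqE; case: b b' => -[].
Qed.

Lemma boundary_edge_double c : boundary R Gh c = boundary R G (p_ c).
Proof.
apply/ffunP => v; rewrite boundaryE [RHS]boundaryE.
rewrite !(big_mkcond (fun e : gE Gh => _ == v)) !(big_mkcond (fun e : gE G => _ == v)) /=.
rewrite !sum_edge_double -!sumrB; apply: eq_bigr => e _; rewrite !edge_double_pE /=.
by case: (tgt e == v); case: (src e == v); rewrite ?addr0 ?add0r ?subr0 ?sub0r ?subrr ?opprB.
Qed.

Lemma memv_H1_edge_double c : (c \in H1 R Gh) = (p_ c \in H1 R G).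
Proof. by rewrite !memv_ker boundary_edge_double. Qed.

Lemma edge_double_sigmaK : involutive s_.
Proof. by move=> c; apply/ffunP => -[e b]; rewrite !edge_double_sigmaE negbK opprK. Qed.

Lemma edge_double_p_sigma c : p_ (s_ c) = p_ c.
Proof. by apply/ffunP => e; rewrite !edge_double_pE !edge_double_sigmaE opprK addrC. Qed.

Lemma limg_edge_double_p_H1 : (p_ @: H1 R Gh <= H1 R G)%VS.
Proof. by apply/subvP => _ /memv_imgP[c + ->]; rewrite memv_H1_edge_double. Qed.

Lemma limg_edge_double_sigma_H1 : (s_ @: H1 R Gh <= H1 R Gh)%VS.
Proof.
by apply/subvP => _ /memv_imgP[c + ->]; rewrite !memv_H1_edge_double edge_double_p_sigma.
Qed.

Lemma lker_edge_double_p : lker p_ = passmx.leigenspace s_ (-1).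
Proof.
apply/vspaceP => c; rewrite memv_ker memv_leigenspace scaleN1r.
apply/eqP/eqP => [pc0 | sc].
  apply/ffunP => -[e b]; have /eqP := congr1 (fun a => a e) pc0.
  by rewrite edge_double_sigmaE !ffunE edge_double_pE subr_eq0 => /eqP; case: b => ->.
apply/ffunP => e; have := congr1 (fun c' => c' (e, true)) sc.
by rewrite edge_double_sigmaE ffunE edge_double_pE => /oppr_inj->; rewrite subrr ffunE.
Qed.

Lemma lker_edge_double_p_H1 : (lker p_ <= H1 R Gh)%VS.
Proof. by apply/subvP => c; rewrite memv_H1_edge_double !memv_ker => /eqP->; rewrite linear0. Qed.

Definition edge_double_diag a : C1 R Gh := [ffun x => a x.1].

Fact edge_double_diag_is_linear : linear edge_double_diag.
Proof. by move=> k a a'; apply/ffunP => x; rewrite !ffunE. Qed.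

HB.instance Definition _ :=
  GRing.isLinear.Build R (C1 R G) (C1 R Gh) _ edge_double_diag
    edge_double_diag_is_linear.

Lemma lker_edge_double_diag : lker (linfun edge_double_diag) = 0%VS.
Proof.
apply/vspaceP => a; rewrite memv_ker memv0 lfunE /=.
apply/eqP/eqP => [da0 | ->]; last by rewrite linear0.
by apply/ffunP => e; have := congr1 (fun c => c (e, true)) da0; rewrite !ffunE.
Qed.

Lemma limg_edge_double_diag : limg (linfun edge_double_diag) = lker p_.
Proof.
apply/vspaceP => c; apply/memv_imgP/idP => [[a _ ->] | ].
  by rewrite memv_ker lfunE; apply/eqP/ffunP => e; rewrite edge_double_pE !ffunE subrr.
rewrite memv_ker => /eqP pc0; exists [ffun e => c (e, true)]; first exact: memvf.
rewrite lfunE; apply/ffunP => -[e b]; rewrite !ffunE; case: b => //=.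
by have /eqP := congr1 (fun a => a e) pc0; rewrite edge_double_pE ffunE subr_eq0 => /eqP.
Qed.

Hypothesis two_neq0 : (2%:R : R) != 0.

Definition edge_double_lift a : C1 R Gh :=
  [ffun x => if x.2 then a x.1 / 2%:R else - (a x.1 / 2%:R)].

Lemma edge_double_liftK a : p_ (edge_double_lift a) = a.
Proof.
have halves (x : R) : x / 2%:R + x / 2%:R = x.
  by rewrite -mulrDl -mulr2n -(mulr_natr x) mulfK.
by apply/ffunP => e; rewrite edge_double_pE !ffunE /= opprK halves.
Qed.

Lemma edge_double_sigma_lift a : s_ (edge_double_lift a) = edge_double_lift a.
Proof. by apply/ffunP => -[e b]; rewrite edge_double_sigmaE !ffunE; case: b; rewrite ?opprK. Qed.

Lemma limg_edge_double_p_E1 :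
  (p_ @: (H1 R Gh :&: passmx.leigenspace s_ 1))%VS = H1 R G.
Proof.
apply/eqP; rewrite eqEsubv (subv_trans (limgS _ (capvSl _ _)) limg_edge_double_p_H1) /=.
apply/subvP => a Ha; rewrite -[a]edge_double_liftK memv_img //.
rewrite memv_cap memv_H1_edge_double edge_double_liftK Ha memv_leigenspace.
by rewrite scale1r edge_double_sigma_lift eqxx.
Qed.

End EdgeDouble.

Theorem lemma2p3 (R : realFieldType) (G : graph) :
  let Gh := edge_double G in
  let p_ := chain_map R (edge_double_p G) in
  let s_ := chain_map R (edge_double_sigma G) in
  let E1 := (H1 R Gh :&: passmx.leigenspace s_ 1)%VS in
  let Em1 := (H1 R Gh :&: passmx.leigenspace s_ (-1))%VS in
  [/\ (E1 + Em1)%VS = H1 R Gh /\ directv (E1 + Em1),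
      (p_ @: H1 R Gh <= H1 R G)%VS,
      (p_ @: E1)%VS = H1 R G /\ (E1 :&: lker p_)%VS = 0%VS,
      (H1 R Gh :&: lker p_)%VS = Em1
    & exists f : 'Hom(C1 R G, C1 R Gh), lker f = 0%VS /\ limg f = Em1].
Proof.
move=> Gh p_ s_ E1 Em1.
have two_neq0 : (2%:R : R) != 0 by rewrite pnatr_eq0.
have kerE : (H1 R Gh :&: lker p_)%VS = Em1 by rewrite lker_edge_double_p.
split.
- split; last exact: directv_leigenspace1N1.
  exact/addv_leigenspace1N1/limg_edge_double_sigma_H1/edge_double_sigmaK.
- exact: limg_edge_double_p_H1.
- split; first exact: limg_edge_double_p_E1.
  apply/eqP; rewrite -subv0 -(capv_leigenspace1N1 s_ two_neq0) lker_edge_double_p.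
  exact/capvS/subvv/capvSr.
- exact: kerE.
- exists (linfun (@edge_double_diag R G)); split; first exact: lker_edge_double_diag.
  by rewrite -kerE limg_edge_double_diag; apply/esym/capv_idPr/lker_edge_double_p_H1.
Qed.
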